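(* In every T2R semigroup $S=S_0\cup S_1$ with $S_1=\{u,v\}$, there is an element $b\in S_0$ such that $ub\neq b$ and $vb\neq b$.
   Context: A semigroup $S$ is a $\Delta$-semigroup if the lattice of all congruences of $S$ is a chain with respect to inclusion. A semigroup $N$ with zero $0$ is nil if every element has some power equal to $0$; non-trivial means having more than one element. A T2R semigroup is a $\Delta$-semigroup $S$ which is the disjoint union of a non-trivial nil ideal $S_0$ (with zero $0$, which is then the zero of $S$) and a subsemigroup $S_1=\{u,v\}$, $u\neq v$, which is a right zero semigroup ($xy=y$ for $x,y\in S_1$). *)

From Stdlib Require Import Arith.

Definition associative {T : Type} (mul : T -> T -> T) : Prop :=
  forall x y z, mul x (mul y z) = mul (mul x y) z.

(* x^n for n >= 1, with pow mul x 0 = x, i.e. pow mul x n = x^(n+1) *)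
Fixpoint pow1 {T : Type} (mul : T -> T -> T) (x : T) (n : nat) : T :=
  match n with
  | O => x
  | S k => mul (pow1 mul x k) x
  end.

Definition is_congruence {T : Type} (mul : T -> T -> T) (R : T -> T -> Prop) : Prop :=
  (forall x, R x x) /\ (forall x y, R x y -> R y x) /\
  (forall x y z, R x y -> R y z -> R x z) /\
  (forall x y c, R x y -> R (mul c x) (mul c y) /\ R (mul x c) (mul y c)).

Definition rel_incl {T : Type} (R1 R2 : T -> T -> Prop) : Prop :=
  forall x y, R1 x y -> R2 x y.

Definition delta_semigroup {T : Type} (mul : T -> T -> T) : Prop :=
  associative mul /\
  forall R1 R2, is_congruence mul R1 -> is_congruence mul R2 ->
    rel_incl R1 R2 \/ rel_incl R2 R1.

Definition T2R {T : Type} (mul : T -> T -> T) (S0 : T -> Prop) (z u v : T) : Prop :=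
  delta_semigroup mul /\
  (forall x, S0 x \/ x = u \/ x = v) /\ ~ S0 u /\ ~ S0 v /\ u <> v /\
  (forall a x, S0 a -> S0 (mul a x) /\ S0 (mul x a)) /\
  S0 z /\ (forall a, S0 a -> mul z a = z /\ mul a z = z) /\
  (forall a, S0 a -> exists n, pow1 mul a n = z) /\
  (exists a, S0 a /\ a <> z) /\
  mul u u = u /\ mul u v = v /\ mul v u = u /\ mul v v = v.

From Stdlib Require Import Classical.

(* Proof of Proposition 6.  Suppose, for a contradiction, that every b in S0
   satisfies ub = b or vb = b.  Because {u, v} is a right zero semigroup, each
   of these equalities implies the other, so u and v act as the identity on S0.
   We then compare three kinds of congruences, available in any semigroup:
   - the relation "x and y act identically from the left", which identifies
     u and v;
   - the Rees congruence of the ideal S0;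
   - the congruence collapsing a single pair {p, q} (when it is stable).
   The first two must be comparable; since u and v are not in S0 the Rees
   congruence lies below the first one, which forces S0 * S = {0} (here the
   nil hypothesis enters: 0w is idempotent, hence zero).  Then collapsing
   {a, 0} (for a nonzero a in S0) and collapsing {u, v} are both congruences,
   and they are incomparable, contradicting the Delta-property. *)

Section SemigroupBasics.

Context {T : Type} (mul : T -> T -> T).

Definition same_left_action (x y : T) : Prop := forall s, mul x s = mul y s.

Lemma same_left_action_congruence :
  associative mul -> is_congruence mul same_left_action.
Proof.
  intros assoc; unfold same_left_action; refine (conj _ (conj _ (conj _ _))).
  - reflexivity.
  - intros x y H s; symmetry; apply H.
  - intros x y w H1 H2 s; rewrite H1; apply H2.
  - intros x y c H; split; intro s; rewrite <- !assoc, H; reflexivity.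
Qed.

Definition rees (I : T -> Prop) (x y : T) : Prop := x = y \/ (I x /\ I y).

Lemma rees_congruence (I : T -> Prop) :
  (forall a x, I a -> I (mul a x) /\ I (mul x a)) -> is_congruence mul (rees I).
Proof.
  intros ideal; unfold rees; refine (conj _ (conj _ (conj _ _))).
  - left; reflexivity.
  - intros x y [<- | [Hx Hy]]; auto.
  - intros x y w [<- | [Hx Hy]] [<- | [Hy' Hw]]; auto.
  - intros x y c [<- | [Hx Hy]]; [split; left; reflexivity |].
    destruct (ideal x c Hx), (ideal y c Hy); split; right; split; assumption.
Qed.

Definition identify (p q x y : T) : Prop :=
  x = y \/ (x = p /\ y = q) \/ (x = q /\ y = p).

Lemma identify_sym (p q x y : T) : identify p q x y -> identify p q y x.
Proof. unfold identify; intros [<- | [[-> ->] | [-> ->]]]; auto. Qed.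

Lemma identify_congruence (p q : T) :
  (forall c, identify p q (mul c p) (mul c q) /\ identify p q (mul p c) (mul q c)) ->
  is_congruence mul (identify p q).
Proof.
  intros stable; refine (conj _ (conj _ (conj _ _))).
  - left; reflexivity.
  - apply identify_sym.
  - unfold identify; intros x y w [<- | [[-> ->] | [-> ->]]] H; [exact H | |];
      destruct H as [<- | [[H ->] | [H ->]]]; subst; auto.
  - intros x y c [<- | [[-> ->] | [-> ->]]]; split;
      [left; reflexivity .. | apply stable | apply stable
      | apply identify_sym, stable | apply identify_sym, stable].
Qed.

Lemma identify_incl (p q p' q' : T) :
  p <> q -> rel_incl (identify p q) (identify p' q') ->
  (p = p' /\ q = q') \/ (p = q' /\ q = p').
Proof.
  intros Hpq incl.
  destruct (incl p q) as [H | [H | H]]; [right; left; auto | contradiction | |]; auto.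
Qed.

Lemma fix_transfer (x y b : T) :
  associative mul -> mul y x = x -> mul x b = b -> mul y b = b.
Proof. intros assoc Hyx Hxb; rewrite <- Hxb at 1; rewrite assoc, Hyx; exact Hxb. Qed.

Lemma pow1_idem (e : T) : mul e e = e -> forall n, pow1 mul e n = e.
Proof. intros He n; induction n as [| n IH]; simpl; [reflexivity | rewrite IH; exact He]. Qed.

End SemigroupBasics.

Section NoMovedElement.

(* The data of a T2R semigroup, together with the assumption (to be refuted)
   that u and v fix every element of S0. *)
Variables (T : Type) (mul : T -> T -> T) (S0 : T -> Prop) (z u v a : T).

Hypothesis assoc : associative mul.
Hypothesis chain : forall R1 R2, is_congruence mul R1 -> is_congruence mul R2 ->
  rel_incl R1 R2 \/ rel_incl R2 R1.
Hypothesis cover : forall x, S0 x \/ x = u \/ x = v.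
Hypothesis u_notin : ~ S0 u.
Hypothesis u_neq_v : u <> v.
Hypothesis ideal : forall b x, S0 b -> S0 (mul b x) /\ S0 (mul x b).
Hypothesis z_in : S0 z.
Hypothesis zero : forall b, S0 b -> mul z b = z /\ mul b z = z.
Hypothesis nil : forall b, S0 b -> exists n, pow1 mul b n = z.
Hypothesis a_in : S0 a.
Hypothesis a_neq_z : a <> z.
Hypotheses (uu : mul u u = u) (uv : mul u v = v) (vu : mul v u = u) (vv : mul v v = v).
Hypothesis fixes : forall b, S0 b -> mul u b = b /\ mul v b = b.

(* An element w with w 0 = 0 also satisfies 0 w = 0: (0w)(0w) = 0(w0)w = 0w
   is an idempotent of the nil ideal S0, hence equals 0. *)
Lemma zero_absorbs (w : T) : mul w z = z -> mul z w = z.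
Proof.
  intros Hwz.
  assert (idem : mul (mul z w) (mul z w) = mul z w).
  { rewrite <- (assoc z w (mul z w)), (assoc w z w), Hwz, assoc, (proj1 (zero z z_in)).
    reflexivity. }
  destruct (nil (mul z w) (proj1 (ideal z w z_in))) as [n Hn].
  rewrite (pow1_idem mul _ idem) in Hn; exact Hn.
Qed.

Lemma u_v_same_left_action : same_left_action mul u v.
Proof.
  intro s; destruct (cover s) as [Hs | [-> | ->]]; [| congruence | congruence].
  destruct (fixes s Hs) as [-> ->]; reflexivity.
Qed.

(* The Rees congruence of S0 cannot
   contain the left-action congruence (which identifies u and v outside S0),
   so it is contained in it: every x in S0 acts on the left like 0. *)
Lemma S0_null (x s : T) : S0 x -> mul x s = z.
Proof.
  intros Hx.
  destruct (chain _ _ (rees_congruence mul S0 ideal) (same_left_action_congruence mul assoc))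
    as [incl | incl].
  - rewrite (incl x z (or_intror (conj Hx z_in)) s).
    destruct (cover s) as [Hs | [-> | ->]]; [apply zero, Hs | |];
      apply zero_absorbs, fixes, z_in.
  - destruct (incl u v u_v_same_left_action) as [H | [H _]]; contradiction.
Qed.

(* Since S0 S = {0} and u, v fix S0, the pair {a, 0} is translation-stable. *)
Lemma identify_a_z_congruence : is_congruence mul (identify a z).
Proof.
  apply identify_congruence; intro c; split.
  - destruct (cover c) as [Hc | [-> | ->]].
    + left; rewrite !(S0_null c); auto.
    + destruct (fixes a a_in), (fixes z z_in); right; left; auto.
    + destruct (fixes a a_in), (fixes z z_in); right; left; auto.
  - left; rewrite !(S0_null _ c); auto.
Qed.

(* Since S0 S = {0} and u, v act alike on S0, the pair {u, v} is stable. *)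
Lemma identify_u_v_congruence : is_congruence mul (identify u v).
Proof.
  apply identify_congruence; intro c; split.
  - destruct (cover c) as [Hc | [-> | ->]].
    + left; rewrite !(S0_null c); auto.
    + right; left; auto.
    + right; left; auto.
  - destruct (cover c) as [Hc | [-> | ->]].
    + destruct (fixes c Hc); left; congruence.
    + left; congruence.
    + left; congruence.
Qed.

(* The two collapsing congruences are incomparable: either inclusion would
   force {a, 0} = {u, v}, putting u into S0. *)
Lemma no_moved_element_absurd : False.
Proof.
  apply u_notin.
  destruct (chain _ _ identify_a_z_congruence identify_u_v_congruence) as [incl | incl].
  - destruct (identify_incl _ _ _ _ a_neq_z incl) as [[<- _] | [_ <-]]; assumption.
  - destruct (identify_incl _ _ _ _ u_neq_v incl) as [[-> _] | [-> _]]; assumption.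
Qed.

End NoMovedElement.

Theorem proposition6 (T : Type) (mul : T -> T -> T) (S0 : T -> Prop) (z u v : T) :
  T2R mul S0 z u v ->
  exists b, S0 b /\ mul u b <> b /\ mul v b <> b.
Proof.
  intros [[assoc chain] [cover [u_notin [_ [u_neq_v [ideal [z_in [zero [nil
          [[a [a_in a_neq_z]] [uu [uv [vu vv]]]]]]]]]]]]].
  apply NNPP; intro no_moved.
  (* Otherwise u and v both fix every b in S0, as each fixes what the other fixes. *)
  assert (fixes : forall b, S0 b -> mul u b = b /\ mul v b = b).
  { intros b Hb.
    destruct (classic (mul u b = b)) as [Hu | Hu];
      [| destruct (classic (mul v b = b)) as [Hv | Hv]].
    - split; [exact Hu | exact (fix_transfer mul u v b assoc vu Hu)].
    - split; [exact (fix_transfer mul v u b assoc uv Hv) | exact Hv].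
    - exfalso; apply no_moved; exists b; auto. }
  exact (no_moved_element_absurd T mul S0 z u v a assoc chain cover u_notin u_neq_v
           ideal z_in zero nil a_in a_neq_z uu uv vu vv fixes).
Qed.
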